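(* Let $p,q\ge0$, $n=p+q\ge1$, $N=2^{\lfloor (n+1)/2\rfloor}$, and let $M\in\mathcal{G}^{\mathbb{C}}_{p,q}$ be normal, i.e. $M^\dagger M=MM^\dagger$. Then ${\rm rank}(M)=N$ if $C_{(N)}(M)\ne0$; for $k\in\{2,\dots,N-1\}$, ${\rm rank}(M)=k$ if $C_{(j)}(M)=0$ for all $j=k+1,\dots,N$ and $C_{(k)}(M)\ne0$; ${\rm rank}(M)=1$ if $C_{(j)}(M)=0$ for all $j=2,\dots,N$ and $M\neq0$; ${\rm rank}(M)=0$ if $M=0$.
   Context: Let $\mathcal{G}_{p,q}$ be the real Clifford algebra with identity $e$ and generators $e_1,\dots,e_n$ satisfying $e_ae_b+e_be_a=2\eta_{ab}e$, $\eta={\rm diag}(1,\dots,1,-1,\dots,-1)$ ($p$ ones, $q$ minus ones), basis elements $e_A=e_{a_1}\cdots e_{a_k}$ for $a_1<\dots<a_k$, and $\mathcal{G}^{\mathbb{C}}_{p,q}=\mathbb{C}\otimes\mathcal{G}_{p,q}$ with elements $M=\sum_A m_Ae_A$, $m_A\in\mathbb{C}$. Hermitian conjugation: $M^\dagger=\sum_A\overline{m_A}(e_A)^{-1}$. Let $\langle M\rangle_0$ denote the coefficient of $e$. Let $\beta$ be an algebra isomorphism from $\mathcal{G}^{\mathbb{C}}_{p,q}$ onto ${\rm Mat}(N,\mathbb{C})$ if $n$ is even, and onto block-diagonal matrices ${\rm diag}(X,Y)$, $X,Y\in{\rm Mat}(N/2,\mathbb{C})$, if $n$ is odd. The rank is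 ${\rm rank}(M):={\rm rank}(\beta(M))$, independent of $\beta$. The characteristic polynomial coefficients $C_{(k)}(M)$ are defined by $\det(\lambda I_N-\beta(M))=\lambda^N-C_{(1)}(M)\lambda^{N-1}-\cdots-C_{(N)}(M)$ (independent of $\beta$); equivalently by the recursion $M_{(1)}=M$, $C_{(k)}=\frac{N}{k}\langle M_{(k)}\rangle_0$, $M_{(k+1)}=M(M_{(k)}-C_{(k)})$, $k=1,\dots,N$. *)

From HB Require Import structures.
From mathcomp Require Import all_boot all_order all_algebra.
From mathcomp Require Import complex.
From mathcomp Require Import reals.
Set Implicit Arguments.
Unset Strict Implicit.
Unset Printing Implicit Defensive.
Import Order.TTheory GRing.Theory Num.Theory.
Local Open Scope ring_scope.

(* Complexified Clifford algebra G^C_{p,q}: an element M = sum_A m_A e_A is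
   its coefficient function A |-> m_A, A ranging over subsets of
   {0,...,n-1} (n = p+q), generator e_a with a < p squares to +1,
   generator e_a with a >= p squares to -1. *)
Notation cl p q C := {ffun {set 'I_(p + q)} -> C}.

Section Clifford.
Variables (p q : nat) (C : numClosedFieldType).
Local Notation I := ('I_(p + q)).
Local Notation cl := (cl p q C).

(* e_A e_B = cl_sign A B e_{A Delta B}: (-1)^(number of pairs a in A, b in B
   with a > b) times prod_{a in A :&: B} eta_aa. *)
Definition cl_sign (A B : {set I}) : C :=
  (-1) ^+ (#|[set ab : I * I | [&& ab.1 \in A, ab.2 \in B & (ab.2 < ab.1)%N]]|
           + #|[set a in A :&: B | (p <= a)%N]|).

Definition cl_e (A : {set I}) : cl := [ffun B => (B == A)%:R].
Definition cl_one : cl := cl_e set0.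
Definition cl_scal (c : C) : cl := [ffun B => if B == set0 then c else 0].

Definition cl_mul (M N : cl) : cl :=
  [ffun D => \sum_(A : {set I}) \sum_(B : {set I} | (A :\: B) :|: (B :\: A) == D)
                cl_sign A B * M A * N B].

Definition cl_scalar_part (M : cl) : C := M set0.

(* Hermitian conjugation M^dagger = sum_A conj(m_A) (e_A)^{-1};
   since e_A e_A = cl_sign A A e with cl_sign A A = +-1,
   (e_A)^{-1} = cl_sign A A e_A. *)
Definition cl_herm (M : cl) : cl := [ffun A => (M A)^* * cl_sign A A].

Definition cl_normal (M : cl) : Prop := cl_mul (cl_herm M) M = cl_mul M (cl_herm M).

Definition cl_N : nat := 2 ^ (p + q).+1./2.

Fixpoint cl_Mk (M : cl) (k : nat) : cl :=
  match k with
  | 0 => M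
  | k'.+1 =>
      if k' is 0 then M else
      let Mk := cl_Mk M k' in
      cl_mul M [ffun A => Mk A - cl_scal ((cl_N)%:R / k'%:R * cl_scalar_part Mk) A]
  end.

Definition cl_C (M : cl) (k : nat) : C := (cl_N)%:R / k%:R * cl_scalar_part (cl_Mk M k).

Definition cl_block_diag (X : 'M[C]_cl_N) : bool :=
  [forall i : 'I_cl_N, forall j : 'I_cl_N, ((i < cl_N./2)%N != (j < cl_N./2)%N) ==> (X i j == 0)].

Definition is_beta (beta : cl -> 'M[C]_cl_N) : Prop :=
  [/\ forall (a : C) (M N : cl), beta [ffun A => a * M A + N A] = a *: beta M + beta N,
      forall M N : cl, beta (cl_mul M N) = beta M *m beta N,
      beta cl_one = 1%:M,
      injective beta &
      forall X : 'M[C]_cl_N,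
        (exists M : cl, beta M = X) <-> (if odd (p + q) then cl_block_diag X else true)].

End Clifford.

(* beta M is diagonalizable: <X† X>_0 = \sum_A |x_A|^2 is positive definite, so
   for normal M, (M - c)^2 Y = 0 forces (M - c) Y = 0 in the algebra, and the
   minimal polynomial of beta M has simple roots.  For A <> {} the matrix beta e_A
   is traceless: it anticommutes with some beta e_B, or, for the full set when n is
   odd, it is central, hence of the form diag(x, -x) on the two blocks.  Hence
   tr (beta X) = N <X>_0 and the recursion for C_(k) is the Faddeev-LeVerrier
   algorithm: by Newton's identities C_(k) = (-1)^(k+1) e_k(d) for the eigenvalues
   d of beta M.  The rank of the diagonalizable beta M is the number r of nonzero
   eigenvalues, and e_r(d) <> 0 while e_k(d) = 0 for k > r. *)

From HB Require Import structures.
From mathcomp Require Import all_boot all_order all_algebra.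
From mathcomp Require Import complex reals.
From mathcomp Require Import ring zify.
Import Order.TTheory GRing.Theory Num.Theory.
Local Open Scope ring_scope.
Set Implicit Arguments.
Unset Strict Implicit.
Unset Printing Implicit Defensive.

Section SignedElementarySymmetric.
Variable R : comPzRingType.

(* [sesym s j] is (-1)^j e_j(s), the coefficient of X^j in \prod_(x <- s) (1 - x X). *)
Fixpoint sesym (s : seq R) (j : nat) : R :=
  if s is x :: s' then
    (if j is j'.+1 then sesym s' j - x * sesym s' j' else sesym s' 0)
  else (j == 0)%:R.

Definition power_sum (s : seq R) (m : nat) : R := \sum_(x <- s) x ^+ m.

Lemma sesym0 s : sesym s 0 = 1.
Proof. by elim: s. Qed.

Lemma sesym_cons_conv x s k (F : nat -> R) :
  \sum_(j < k.+1) sesym (x :: s) j * F (k.+1 - j)%N =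
  \sum_(j < k.+1) sesym s j * F (k.+1 - j)%N - x * \sum_(j < k) sesym s j * F (k - j)%N.
Proof.
rewrite !big_ord_recl /= !subn0 mulr_sumr -addrA -sumrB; congr (_ + _).
by apply: eq_bigr => j _; rewrite /bump /= add1n subSS mulrBl mulrA.
Qed.

Lemma newton_sesym s m :
  \sum_(j < m) sesym s j * power_sum s (m - j) + m%:R * sesym s m = 0.
Proof.
elim: s m => [|x s IH] [|k]; rewrite ?big_ord0 ?mul0r ?addr0 //.
  by rewrite big1 ?add0r ?mulr0 // => j _; rewrite /power_sum big_nil mulr0.
have power_sum_cons i : power_sum (x :: s) i = x ^+ i + power_sum s i.
  by rewrite /power_sum big_cons.
have sum_powers : \sum_(j < k.+1) sesym s j * x ^+ (k.+1 - j) =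
    x * (\sum_(j < k) sesym s j * x ^+ (k - j) + sesym s k).
  rewrite big_ord_recr /= subSnn expr1 mulrDr mulr_sumr [x * _]mulrC; congr (_ + _).
  by apply: eq_bigr => j _; rewrite subSn 1?ltnW // exprS mulrCA.
have newton_s i : \sum_(j < i) sesym s j * power_sum s (i - j) = - (i%:R * sesym s i).
  by apply/eqP; rewrite -addr_eq0 IH.
under eq_bigr do rewrite power_sum_cons mulrDr.
rewrite big_split /= (sesym_cons_conv x s k (fun i => x ^+ i)).
rewrite (sesym_cons_conv x s k (power_sum s)) sum_powers !newton_s.
by rewrite /= -[k.+1]addn1 natrD; ring.
Qed.

End SignedElementarySymmetric.

Section SesymNonzero.
Variable R : idomainType.
Implicit Type s : seq R.

Lemma sesym_eq0 s j : (count (predC1 0%R) s < j)%N -> sesym s j = 0.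
Proof.
elim: s j => [|x s IH] [|j] //=; case: eqP => [->|_] /= ltsj.
- by rewrite mul0r subr0 IH.
- by rewrite !IH ?mulr0 ?subr0 // (leq_trans _ ltsj).
Qed.

Lemma sesym_count_neq0 s : sesym s (count (predC1 0) s) != 0.
Proof.
elim: s => [|x s IH] /=; first by rewrite oner_eq0.
case: (eqVneq x 0) => [->|x_neq0]; rewrite /= ?eqxx ?add0n ?add1n.
  by case: (count _ s) IH => [|c] IH; rewrite ?mul0r ?subr0.
by rewrite sesym_eq0 // sub0r oppr_eq0 mulf_neq0.
Qed.

End SesymNonzero.

Lemma rank_diag_mx (F : fieldType) n (d : 'rV[F]_n) :
  \rank (diag_mx d) = count (predC1 0) [seq d 0 i | i <- enum 'I_n].
Proof.
elim: n d => [|n IH] d; first by rewrite thinmx0 mxrank0 enum_ord0.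
rewrite enum_ordSl /= -map_comp.
move: d; rewrite -[n.+1]/(1 + n)%N => d.
rewrite -[d]hsubmxK diag_mx_row rank_diag_block_mx IH.
have -> : ord0 = lshift n (ord0 : 'I_1) by apply: val_inj.
rewrite row_mxEl rank_rV; congr (nat_of_bool _ + _)%N.
  apply/idP/idP; apply: contraNN.
    by move/eqP=> l0; apply/eqP/matrixP => i j; rewrite !ord1 mxE l0 mul0rn mxE.
  by move/eqP/matrixP/(_ 0 0); rewrite !mxE eqxx mulr1n => ->.
congr (count _ _); apply: eq_map => i /=.
have -> : lift (lshift n (ord0 : 'I_1)) i = rshift 1 i by apply: val_inj.
by rewrite row_mxEr.
Qed.

Section DiagonalizableCriterion.
Variable F : closedFieldType.

Lemma uniq_of_sqfree_prod_XsubC (rs : seq F) :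
  (forall x, ~~ (('X - x%:P) ^+ 2 %| \prod_(z <- rs) ('X - z%:P))) -> uniq rs.
Proof.
elim: rs => [//|z rs IH] sqfree /=; apply/andP; split.
  apply/negP => z_rs; move: (sqfree z); rewrite big_cons expr2 dvdp_mul2l ?polyXsubC_eq0 //.
  by rewrite dvdp_XsubCl root_prod_XsubC z_rs.
apply: IH => x; apply/negP => dvd_sq; move: (sqfree x); rewrite big_cons.
by rewrite (dvdp_trans dvd_sq) // dvdp_mull.
Qed.

(* The hypothesis forbids ('X - x)^2 to divide the minimal polynomial of A. *)
Lemma diagonalizable_of_horner_ker n (A : 'M[F]_n.+1) :
  (forall (x : F) (g : {poly F}), (A - x%:M) *m ((A - x%:M) *m horner_mx A g) = 0 ->
      (A - x%:M) *m horner_mx A g = 0) -> diagonalizable A.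
Proof.
move=> ker_sq.
have [rs mxminpolyE] := closed_field_poly_normal (mxminpoly A).
rewrite (monicP (mxminpoly_monic A)) scale1r in mxminpolyE.
apply/diagonalizableP; exists rs; last by rewrite -mxminpolyE.
apply: uniq_of_sqfree_prod_XsubC => x; apply/negP; rewrite -mxminpolyE => /dvdpP [g minpoly_g].
have hornerXsubC : horner_mx A ('X - x%:P) = A - x%:M.
  by rewrite rmorphB /= horner_mx_X horner_mx_C.
have {}minpoly_g : mxminpoly A = ('X - x%:P) * (('X - x%:P) * g).
  by rewrite minpoly_g expr2 mulrC mulrA.
have root_g : horner_mx A (('X - x%:P) * g) = 0.
  rewrite rmorphM /= hornerXsubC; apply: ker_sq.
  by rewrite -hornerXsubC !mulmxE -!rmorphM -minpoly_g; exact: mx_root_minpoly.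
have g_neq0 : ('X - x%:P) * g != 0.
  apply: contraTneq (mxminpoly_monic A) => g0.
  by rewrite minpoly_g g0 mulr0 monicE lead_coef0 eq_sym oner_eq0.
have := dvdp_leq g_neq0 (mxminpoly_min root_g).
by rewrite minpoly_g mulrC size_Mmonic ?monicXsubC ?size_XsubC // addn2 ltnn.
Qed.

Lemma diagonalizable_of_subalg n (A : 'M[F]_n) (S : 'M[F]_n -> Prop) :
  S A -> (forall c : F, S c%:M) -> (forall X Y, S X -> S Y -> S (X + Y)) ->
  (forall X Y, S X -> S Y -> S (X *m Y)) ->
  (forall (x : F) Z, S Z -> (A - x%:M) *m ((A - x%:M) *m Z) = 0 -> (A - x%:M) *m Z = 0) ->
  diagonalizable A.
Proof.
case: n A S => [|n] A S SA S_scalar SD SM ker_sq.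
  by rewrite thinmx0; exact: diagonalizable0.
apply: diagonalizable_of_horner_ker => x g; apply: ker_sq.
elim/poly_ind: g => [|g c Sg].
  by rewrite rmorph0 -(scale0r (1%:M : 'M[F]_n.+1)) scalemx1.
by rewrite rmorphD rmorphM /= horner_mx_X horner_mx_C; apply: SD => //; apply: SM.
Qed.

End DiagonalizableCriterion.

Section DeltaCommute.
Variables (R : pzSemiRingType) (n : nat).
Implicit Types (Z : 'M[R]_n) (i j k l : 'I_n).

Lemma mulmx_deltaE Z i j k l :
  (Z *m delta_mx i j) k l = Z k i * (l == j)%:R.
Proof.
rewrite mxE (bigD1 i) //= big1 ?addr0 => [|i' /negbTE neq_i]; first by rewrite mxE eqxx.
by rewrite mxE neq_i mulr0.
Qed.

Lemma delta_mulmxE Z i j k l :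
  (delta_mx k i *m Z) j l = (j == k)%:R * Z i l.
Proof.
rewrite mxE (bigD1 i) //= big1 ?addr0 => [|i' /negbTE neq_i]; first by rewrite mxE eqxx andbT.
by rewrite mxE neq_i andbF mul0r.
Qed.

Lemma commute_delta_mx_offdiag Z i k :
  Z *m delta_mx i i = delta_mx i i *m Z -> k != i -> Z k i = 0.
Proof.
move=> /matrixP/(_ k i); rewrite mulmx_deltaE delta_mulmxE eqxx mulr1 => -> /negbTE->.
by rewrite mul0r.
Qed.

Lemma commute_delta_mx_diag Z i j :
  Z *m delta_mx i j = delta_mx i j *m Z -> Z i i = Z j j.
Proof. by move=> /matrixP/(_ i j); rewrite mulmx_deltaE delta_mulmxE !eqxx mulr1 mul1r. Qed.

End DeltaCommute.

Lemma sum_sign_halves (V : zmodType) (x : V) n h : n = (h + h)%N ->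
  \sum_(i < n) (if (i < h)%N then x else - x) = 0.
Proof.
move=> ->; rewrite big_split_ord /=.
under eq_bigr do rewrite ltn_ord.
under [X in _ + X]eq_bigr do rewrite ltnNge leq_addr /=.
by rewrite sumrN subrr.
Qed.

Lemma mxtrace_block_commute_sqr (R : idomainType) n h (Z : 'M[R]_n) c :
  n = (h + h)%N ->
  (forall i j : 'I_n, (i < h)%N = (j < h)%N -> Z *m delta_mx i j = delta_mx i j *m Z) ->
  Z *m Z = c%:M -> (forall a, Z != a%:M) -> \tr Z = 0.
Proof.
move=> n_halves Zcomm Zsq Z_nscalar; subst n.
case: (posnP h) => [h0|h_gt0]; first by subst h; rewrite /mxtrace big_ord0.
have i0_lt : (0 < h + h)%N by rewrite addn_gt0 h_gt0.
have j0_lt : (h < h + h)%N by rewrite -addn1 leq_add2l.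
pose x := Z (Ordinal i0_lt) (Ordinal i0_lt); pose y := Z (Ordinal j0_lt) (Ordinal j0_lt).
have Z_offdiag (k i : 'I_(h + h)) : k != i -> Z k i = 0.
  exact/commute_delta_mx_offdiag/Zcomm.
have Z_diag (i : 'I_(h + h)) : Z i i = if (i < h)%N then x else y.
  by case: ifP => hi; apply/commute_delta_mx_diag/Zcomm; rewrite hi //= ?h_gt0 ?ltnn.
have Z_diag_sqr (i : 'I_(h + h)) : Z i i * Z i i = c.
  move/matrixP: Zsq => /(_ i i); rewrite !mxE eqxx mulr1n (bigD1 i) //= big1 ?addr0 //.
  by move=> k /negbTE neq_ki; rewrite Z_offdiag ?mul0r // eq_sym neq_ki.
have x_neq_y : x != y.
  apply: contra (Z_nscalar x) => /eqP eq_xy; apply/eqP/matrixP => k l; rewrite mxE.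
  by case: eqVneq => [<-|/Z_offdiag //]; rewrite Z_diag -eq_xy if_same.
have y_oppx : y = - x.
  have : (x - y) * (x + y) = 0.
    by rewrite mulrDr !mulrBl !Z_diag_sqr [y * x]mulrC subrKA subrr.
  by move/eqP; rewrite mulf_eq0 subr_eq0 (negbTE x_neq_y) /= addrC addr_eq0 => /eqP.
rewrite /mxtrace (eq_bigr (fun i : 'I_(h + h) => if (i < h)%N then x else - x)).
  exact: sum_sign_halves.
by move=> i _; rewrite Z_diag y_oppx.
Qed.

Section UnitConjugation.
Variables (R : comUnitRingType) (n : nat) (P : 'M[R]_n).
Hypothesis P_unit : P \in unitmx.
Implicit Types X Y : 'M[R]_n.

Lemma mxtrace_conj X : \tr (invmx P *m X *m P) = \tr X.
Proof. by rewrite mxtrace_mulC mulmxA mulmxV // mul1mx. Qed.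

Lemma conj_mulmx X Y :
  (invmx P *m X *m P) *m (invmx P *m Y *m P) = invmx P *m (X *m Y) *m P.
Proof. by rewrite !mulmxA mulmxK // -[invmx P *m X *m Y]mulmxA. Qed.

Lemma conj_subr_scalar X c : invmx P *m X *m P - c%:M = invmx P *m (X - c%:M) *m P.
Proof. by rewrite mulmxBr mulmxBl mul_mx_scalar -scalemxAl mulVmx // scalemx1. Qed.

End UnitConjugation.

Section CliffordBasis.
Variables (p q : nat) (C : numClosedFieldType).
Local Notation I := ('I_(p + q)).
Local Notation T := (cl p q C).
Local Notation sg := (@cl_sign p q C).
Local Notation e := (@cl_e p q C).
Local Notation mul := (@cl_mul p q C).
Implicit Types (A B : {set I}) (X Y : T).

Definition cl_scale (a : C) X : T := [ffun A => a * X A].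

Definition symdiff A B := A :\: B :|: B :\: A.

Lemma symdiffC A B : symdiff A B = symdiff B A.
Proof. by rewrite /symdiff setUC. Qed.

Lemma symdiff_eq0 A B : (symdiff A B == set0) = (A == B).
Proof.
apply/eqP/eqP => [/setP sym0|->]; last by rewrite /symdiff setDv setU0.
by apply/setP => x; move: (sym0 x); rewrite !inE; case: (x \in A); case: (x \in B).
Qed.

Lemma symdiffvv A : symdiff A A = set0.
Proof. by apply/eqP; rewrite symdiff_eq0. Qed.

Lemma cl_sign_sqr A B : sg A B * sg A B = 1.
Proof. by rewrite -expr2 /cl_sign -exprM mulnC exprM sqrrN !expr1n. Qed.

Lemma cl_sign_neq0 A B : sg A B != 0.
Proof. by apply: contra_eq_neq (cl_sign_sqr A B) => ->; rewrite mul0r eq_sym oner_neq0. Qed.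

Lemma cl_sign_conj A B : (sg A B)^* = sg A B.
Proof. by rewrite /cl_sign rmorphXn /= rmorphN1. Qed.

Lemma cl_sign00 : sg set0 set0 = 1.
Proof.
rewrite /cl_sign (_ : [set ab : I * I | _] = set0) ?cards0; last first.
  by apply/setP => ab; rewrite !inE.
rewrite (_ : [set a in set0 :&: set0 | _] = set0) ?cards0 //.
by apply/setP => a; rewrite !inE.
Qed.

Let lpairs A B := [set ab : I * I | [&& ab.1 \in A, ab.2 \in B & (ab.2 < ab.1)%N]].

Lemma card_lpairs A B :
  (#|lpairs A B| + #|lpairs B A| + #|A :&: B|)%N = (#|A| * #|B|)%N.
Proof.
pose gpairs := [set ab : I * I | [&& ab.1 \in A, ab.2 \in B & (ab.1 < ab.2)%N]].
pose diag := [set ab : I * I | [&& ab.1 \in A, ab.2 \in B & ab.1 == ab.2]].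
have card_gpairs : #|gpairs| = #|lpairs B A|.
  rewrite -(@card_preimset _ (fun ab : I * I => (ab.2, ab.1)) (lpairs B A)); last first.
    by move=> [a b] [c d] /= [-> ->].
  by apply: eq_card => -[a b]; rewrite !inE /= andbCA.
have card_diag : #|diag| = #|A :&: B|.
  rewrite -(@card_imset _ _ (fun x : I => (x, x)) (A :&: B)); last by move=> x y [].
  apply: eq_card => -[a b]; rewrite !inE /=.
  apply/idP/imsetP => [/and3P[Ha Hb /eqP eq_ab]|[x]].
    by exists a; rewrite ?inE ?Ha -?eq_ab // -eq_ab in Hb *; rewrite Hb.
  by rewrite inE => /andP[Ax Bx] [-> ->]; rewrite Ax Bx eqxx.
have setX_split : setX A B = lpairs A B :|: (gpairs :|: diag).
  apply/setP => [[a b]]; rewrite !inE /= -[a == b](inj_eq val_inj) /=.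
  by case: (ltngtP a b) => H; case: (a \in A); case: (b \in B);
    rewrite //= ?(ltn_eqF H) ?(gtn_eqF H) ?H ?eqxx ?orbT.
have disj1 : lpairs A B :&: (gpairs :|: diag) = set0.
  apply/setP => [[a b]]; rewrite !inE /= -[a == b](inj_eq val_inj) /=.
  by case: (ltngtP a b) => H; case: (a \in A); case: (b \in B);
    rewrite //= ?(ltn_eqF H) ?(gtn_eqF H) ?H ?eqxx ?orbT ?ltnn.
have disj2 : gpairs :&: diag = set0.
  apply/setP => [[a b]]; rewrite !inE /= -(inj_eq val_inj) /=.
  by case: (ltngtP a b) => H; case: (a \in A); case: (b \in B);
    rewrite //= ?(ltn_eqF H) ?(gtn_eqF H) ?H ?eqxx ?orbT ?ltnn.
have := cardsUI (lpairs A B) (gpairs :|: diag).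
rewrite disj1 cards0 addn0 -setX_split cardsX => ->.
have := cardsUI gpairs diag; rewrite disj2 cards0 addn0 => ->.
by rewrite card_gpairs card_diag addnA.
Qed.

Lemma cl_signC A B : sg A B = (-1) ^+ (#|A| * #|B| + #|A :&: B|) * sg B A.
Proof.
rewrite /cl_sign -/(lpairs A B) -/(lpairs B A) -exprD -(card_lpairs A B) (setIC B A).
set k1 := #|lpairs A B|; set k2 := #|lpairs B A|; set c := #|A :&: B|.
set t := #|[set a in A :&: B | _]|.
have -> : (k1 + k2 + c + c + (k2 + t) = (k1 + t) + (k2 + c).*2)%N by rewrite -addnn; lia.
by rewrite [RHS]exprD -mul2n exprM sqrrN expr1n expr1n mulr1.
Qed.

Lemma cl_sign_setT_comm B : odd (p + q) -> sg setT B = sg B setT.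
Proof.
move=> n_odd; rewrite cl_signC setTI cardsT card_ord -{2}[#|B|]mul1n -mulnDl.
by rewrite -signr_odd oddM oddD n_odd /= expr0 mul1r.
Qed.

Lemma cl_mul_e A B : mul (e A) (e B) = cl_scale (sg A B) (e (symdiff A B)).
Proof.
apply/ffunP => D; rewrite !ffunE (bigD1 A) //= [X in _ + X]big1 => [|A' /negbTE neqA].
  rewrite addr0 big_mkcond (bigD1 B) //= [X in _ + X]big1 => [|B' /negbTE neqB].
    by rewrite addr0 !ffunE !eqxx !mulr1 /symdiff eq_sym; case: ifP; rewrite ?mulr1 ?mulr0.
  by rewrite [e B B']ffunE neqB mulr0; case: ifP.
by rewrite big1 // => B' _; rewrite ffunE neqA mulr0 mul0r.
Qed.

Lemma cl_scaleA a b X : cl_scale a (cl_scale b X) = cl_scale (a * b) X.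
Proof. by apply/ffunP => A; rewrite !ffunE mulrA. Qed.

Lemma cl_expand X : X = \sum_A cl_scale (X A) (e A).
Proof.
apply/ffunP => D; rewrite sum_ffunE (bigD1 D) //= big1 => [|A /negbTE neqA].
  by rewrite !ffunE eqxx mulr1 addr0.
by rewrite !ffunE eq_sym neqA mulr0.
Qed.

Lemma cl_MkSS M k : cl_Mk M k.+2 = mul M (cl_Mk M k.+1 - cl_scal p q (cl_C M k.+1)).
Proof. by congr mul; apply/ffunP => A; rewrite !ffunE. Qed.

Lemma N_gt0 : (0 < cl_N p q)%N.
Proof. by rewrite expn_gt0. Qed.

Local Notation N := (cl_N p q).
Local Notation herm := (@cl_herm p q C).

Lemma hermB : zmod_morphism herm.
Proof. by move=> X Y; apply/ffunP => A; rewrite !ffunE rmorphB mulrBl. Qed.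

HB.instance Definition _ := GRing.isZmodMorphism.Build T T herm hermB.

Lemma hermZ a X : herm (cl_scale a X) = cl_scale a^* (herm X).
Proof. by apply/ffunP => A; rewrite !ffunE rmorphM mulrA. Qed.

Lemma herm_e A : herm (e A) = cl_scale (sg A A) (e A).
Proof.
apply/ffunP => B; rewrite !ffunE; case: eqVneq => [->|_]; first by rewrite rmorph1 mul1r mulr1.
by rewrite rmorph0 !mul0r mulr0.
Qed.

Lemma herm_scal c : herm (cl_scal p q c) = cl_scal p q c^*.
Proof.
apply/ffunP => A; rewrite !ffunE; case: eqVneq => [->|_]; first by rewrite cl_sign00 mulr1.
by rewrite rmorph0 mul0r.
Qed.

Lemma hermK : involutive herm.
Proof.
move=> X; apply/ffunP => A.
by rewrite !ffunE rmorphM /= conjCK cl_sign_conj -mulrA cl_sign_sqr mulr1.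
Qed.

Lemma herm_expand X : herm X = \sum_A cl_scale (X A)^* (herm (e A)).
Proof. by rewrite {1}[X]cl_expand raddf_sum /=; apply: eq_bigr => A _; rewrite hermZ. Qed.

Lemma cl_mul_herm_self0 X : mul (herm X) X set0 = \sum_A X A * (X A)^*.
Proof.
rewrite ffunE; apply: eq_bigr => A _.
rewrite (eq_bigl (pred1 A)) => [|B]; last by rewrite /= -/(symdiff A B) symdiff_eq0 eq_sym.
by rewrite big_pred1_eq ffunE mulrCA cl_sign_sqr mulr1 mulrC.
Qed.

Lemma cl_herm_mul_self_eq0 X : mul (herm X) X set0 = 0 -> X = 0.
Proof.
rewrite cl_mul_herm_self0 => /eqP; rewrite psumr_eq0 => [/allP X0|A _]; last first.
  exact: mul_conjC_ge0.
apply/ffunP => A; rewrite ffunE; apply/eqP.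
by rewrite -mul_conjC_eq0; apply: X0; rewrite mem_index_enum.
Qed.

Section Representation.
Variable beta : T -> 'M[C]_N.
Hypothesis beta_is : is_beta beta.

Lemma betaM X Y : beta (mul X Y) = beta X *m beta Y.
Proof. by case: beta_is. Qed.

Lemma beta1 : beta (cl_one p q C) = 1%:M.
Proof. by case: beta_is. Qed.

Lemma beta_inj : injective beta.
Proof. by case: beta_is. Qed.

Lemma beta_linear a X Y : beta [ffun A => a * X A + Y A] = a *: beta X + beta Y.
Proof. by case: beta_is. Qed.

Lemma beta_image W :
  (exists X, beta X = W) <-> (if odd (p + q) then cl_block_diag W else true).
Proof. by case: beta_is. Qed.

Lemma betaB : zmod_morphism beta.
Proof.
move=> X Y; rewrite [RHS]addrC -scaleN1r -beta_linear; congr beta.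
by apply/ffunP => A; rewrite !ffunE mulN1r addrC.
Qed.

HB.instance Definition _ := GRing.isZmodMorphism.Build T 'M[C]_N beta betaB.

Lemma betaZ a X : beta (cl_scale a X) = a *: beta X.
Proof.
rewrite -[_ *: _]addr0 -(raddf0 beta) -beta_linear.
by congr beta; apply/ffunP => A; rewrite !ffunE addr0.
Qed.

Lemma beta_eq0 X : (beta X == 0) = (X == 0).
Proof. by rewrite -(raddf0 beta) (inj_eq beta_inj). Qed.

Lemma beta_scal c : beta (cl_scal p q c) = c%:M.
Proof.
rewrite -scalemx1 -beta1 -betaZ; congr beta.
by apply/ffunP => A; rewrite !ffunE; case: ifP; rewrite ?mulr1 ?mulr0.
Qed.

Lemma beta_expand X : beta X = \sum_A X A *: beta (e A).
Proof.
by rewrite {1}[X]cl_expand raddf_sum /=; apply: eq_bigr => A _; rewrite betaZ.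
Qed.

Lemma beta_e_mul A B : beta (e A) *m beta (e B) = sg A B *: beta (e (symdiff A B)).
Proof. by rewrite -betaM cl_mul_e betaZ. Qed.

Lemma beta_e_sqr A : beta (e A) *m beta (e A) = sg A A *: 1%:M.
Proof. by rewrite beta_e_mul symdiffvv -beta1. Qed.

(* The ring laws of cl_mul are transported along the injective morphism beta. *)
Lemma cl_mulA X Y Z : mul (mul X Y) Z = mul X (mul Y Z).
Proof. by apply: beta_inj; rewrite !betaM mulmxA. Qed.

Lemma cl_mulr0 X : mul X 0 = 0.
Proof. by apply: beta_inj; rewrite betaM (raddf0 beta) mulmx0. Qed.

Lemma cl_mulZl a X Y : mul (cl_scale a X) Y = cl_scale a (mul X Y).
Proof. by apply: beta_inj; rewrite betaM !betaZ betaM scalemxAl. Qed.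

Lemma cl_mulZr a X Y : mul X (cl_scale a Y) = cl_scale a (mul X Y).
Proof. by apply: beta_inj; rewrite betaM !betaZ betaM scalemxAr. Qed.

Lemma cl_mul_suml (J : Type) (r : seq J) (F : J -> T) Y :
  mul (\sum_(i <- r) F i) Y = \sum_(i <- r) mul (F i) Y.
Proof.
apply: beta_inj; rewrite betaM !raddf_sum /= mulmx_suml.
by apply: eq_bigr => i _; rewrite betaM.
Qed.

Lemma cl_mul_sumr (J : Type) (r : seq J) (F : J -> T) X :
  mul X (\sum_(i <- r) F i) = \sum_(i <- r) mul X (F i).
Proof.
apply: beta_inj; rewrite betaM !raddf_sum /=.
by apply: eq_bigr => i _; rewrite betaM.
Qed.

Lemma cl_mul_expand X Y :
  mul X Y = \sum_A \sum_B cl_scale (X A * Y B) (mul (e A) (e B)).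
Proof.
rewrite {1}[X]cl_expand cl_mul_suml; apply: eq_bigr => A _.
rewrite {1}[Y]cl_expand cl_mul_sumr; apply: eq_bigr => B _.
by rewrite cl_mulZl cl_mulZr cl_scaleA.
Qed.

(* Evaluate (e_A e_B) (e_B e_A) with both bracketings. *)
Lemma cl_sign_symdiff A B :
  sg A B * sg B A * sg (symdiff A B) (symdiff A B) = sg A A * sg B B.
Proof.
have /matrixP/(_ (Ordinal N_gt0) (Ordinal N_gt0)) :
    (sg A B * sg B A * sg (symdiff A B) (symdiff A B)) *: (1%:M : 'M_N) =
    (sg A A * sg B B) *: 1%:M.
  transitivity ((beta (e A) *m beta (e B)) *m (beta (e B) *m beta (e A))).
    by rewrite !beta_e_mul symdiffC -scalemxAl -scalemxAr beta_e_sqr !scalerA.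
  rewrite mulmxA -[_ *m beta (e B) *m beta (e B)]mulmxA beta_e_sqr.
  by rewrite -scalemxAr mulmx1 -scalemxAl beta_e_sqr scalerA mulrC.
by rewrite !mxE eqxx !mulr1.
Qed.

Lemma mxtrace_beta_anticomm A B : sg B A = - sg A B -> \tr (beta (e A)) = 0.
Proof.
move=> anticomm; set U := beta (e B); set X := beta (e A).
have UX : U *m X = - (X *m U) by rewrite /U /X !beta_e_mul symdiffC anticomm scaleNr.
have := mxtrace_mulC U (U *m X).
rewrite mulmxA beta_e_sqr -/U UX mulNmx -mulmxA beta_e_sqr -/U.
rewrite -scalemxAr -scalemxAl mul1mx mulmx1 raddfN /= !mxtraceZ => /eqP.
rewrite -subr_eq0 opprK -mulr2n mulrn_eq0 /= mulf_eq0 (negbTE (cl_sign_neq0 B B)).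
by move/eqP.
Qed.

(* e_A anticommutes with e_b for some b \notin A if #|A| is odd, and with e_a for
   any a \in A if #|A| is even. *)
Lemma mxtrace_beta_e A : A != set0 -> ~~ ((A == setT) && odd (p + q)) ->
  \tr (beta (e A)) = 0.
Proof.
move=> A_neq0 A_notT; case A_odd: (odd #|A|).
  have [b b_notA] : exists b, b \notin A.
    apply/existsP; move: A_notT; apply: contraNT => /existsPn A_full.
    have AT : A = setT by apply/setP => b; move: (A_full b); rewrite negbK inE.
    by move: A_odd; rewrite AT cardsT card_ord eqxx => ->.
  apply: (@mxtrace_beta_anticomm A [set b]).
  rewrite cl_signC (_ : [set b] :&: A = set0); last first.
    by apply/setP => x; rewrite !inE; case: eqP => // ->; rewrite (negbTE b_notA).
  by rewrite cards1 cards0 mul1n addn0 -signr_odd A_odd expr1 mulN1r.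
have [a a_A] := set0Pn _ A_neq0.
apply: (@mxtrace_beta_anticomm A [set a]).
rewrite cl_signC (_ : [set a] :&: A = [set a]); last first.
  by apply/setP => x; rewrite !inE; case: eqP => // ->; rewrite a_A.
by rewrite cards1 mul1n addn1 -signr_odd /= A_odd expr1 mulN1r.
Qed.

Section OddDimension.
Hypothesis n_odd : odd (p + q).

Local Notation Z := (beta (e setT)).

Lemma beta_setT_comm W : cl_block_diag W -> Z *m W = W *m Z.
Proof.
move=> W_block; have [X <-] : exists X, beta X = W by apply/beta_image; rewrite n_odd.
rewrite (beta_expand X) mulmx_suml mulmx_sumr; apply: eq_bigr => B _.
by rewrite -scalemxAr -scalemxAl !beta_e_mul symdiffC cl_sign_setT_comm.
Qed.

Lemma mxtrace_beta_setT : \tr Z = 0.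
Proof.
apply: (@mxtrace_block_commute_sqr _ _ N./2 _ (sg setT setT)).
- rewrite addnn even_halfK // /cl_N oddX /= orbF.
  by move: n_odd; case: (p + q)%N.
- move=> i j same_block; apply: beta_setT_comm.
  apply/forallP => k; apply/forallP => l; apply/implyP => diff_block.
  rewrite mxE; apply/eqP; case: (eqVneq k i) => [eq_ki|]; case: (eqVneq l j) => [eq_lj|] //=.
  by move: diff_block; rewrite eq_ki eq_lj same_block eqxx.
- by rewrite beta_e_sqr scalemx1.
have setT_neq0 : setT != set0 :> {set I}.
  by apply/set0Pn; exists (Ordinal (odd_gt0 n_odd)).
move=> a; apply/eqP; rewrite -beta_scal => /beta_inj/ffunP/(_ setT).
by rewrite !ffunE eqxx (negbTE setT_neq0) => /eqP; rewrite oner_eq0.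
Qed.

End OddDimension.

Lemma mxtrace_beta X : \tr (beta X) = N%:R * X set0.
Proof.
rewrite beta_expand raddf_sum (bigD1 set0) //= big1 => [|A A_neq0].
  by rewrite addr0 mxtraceZ beta1 mxtrace1 mulrC.
rewrite mxtraceZ; case AT: ((A == setT) && odd (p + q)).
  by case/andP: AT => /eqP -> n_odd; rewrite mxtrace_beta_setT ?mulr0.
by rewrite mxtrace_beta_e ?mulr0 ?AT.
Qed.

Lemma herm_mul_e A B : herm (mul (e A) (e B)) = mul (herm (e B)) (herm (e A)).
Proof.
rewrite !herm_e cl_mulZl cl_mulZr !cl_mul_e hermZ herm_e cl_sign_conj !cl_scaleA symdiffC.
congr cl_scale; rewrite (symdiffC B A) (mulrC (sg B B)) -cl_sign_symdiff.
by rewrite -[LHS]mulr1 -(cl_sign_sqr B A); ring.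
Qed.

Lemma herm_mul X Y : herm (mul X Y) = mul (herm Y) (herm X).
Proof.
rewrite cl_mul_expand raddf_sum /= (herm_expand Y) (herm_expand X) cl_mul_suml.
under [RHS]eq_bigr do rewrite cl_mul_sumr.
rewrite [RHS]exchange_big /=; apply: eq_bigr => A _.
rewrite raddf_sum /=; apply: eq_bigr => B _.
by rewrite hermZ herm_mul_e cl_mulZl cl_mulZr cl_scaleA rmorphM mulrC.
Qed.

(* For Z = X Y, (X† Z)† (X† Z) = Z† X X† Z = Z† X† X Z = 0 by normality, then
   Z† Z = Y† (X† Z) = 0. *)
Lemma cl_normal_mul_eq0 X Y : cl_normal X -> mul X (mul X Y) = 0 -> mul X Y = 0.
Proof.
move=> X_normal XXY0; set Z := mul X Y.
have XhZ0 : mul (herm X) Z = 0.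
  apply: cl_herm_mul_self_eq0.
  rewrite herm_mul hermK cl_mulA -[mul X (mul (herm X) Z)]cl_mulA -X_normal.
  by rewrite [mul (mul (herm X) X) Z]cl_mulA XXY0 !cl_mulr0 ffunE.
by apply: cl_herm_mul_self_eq0; rewrite {1}/Z herm_mul cl_mulA XhZ0 cl_mulr0 ffunE.
Qed.

Lemma cl_normal_subr_scal X c : cl_normal X -> cl_normal (X - cl_scal p q c).
Proof.
move/(congr1 beta); rewrite /cl_normal !betaM => X_normal.
apply: beta_inj; rewrite !betaM raddfB /= herm_scal !raddfB /= !beta_scal.
rewrite !mulmxBl X_normal !mul_mx_scalar !mul_scalar_mx !scale_scalar_mx mulrC.
rewrite -!addrA !opprB; congr (_ + _).
by rewrite addrCA [RHS]addrCA; congr (_ + _); exact: addrC.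
Qed.

Lemma diagonalizable_beta_normal X : cl_normal X -> diagonalizable (beta X).
Proof.
move=> X_normal; apply: (@diagonalizable_of_subalg _ _ _ (fun W => exists Y, beta Y = W)).
- by exists X.
- by move=> c; exists (cl_scal p q c); rewrite beta_scal.
- by move=> _ _ [Y <-] [Y' <-]; exists (Y + Y'); rewrite raddfD.
- by move=> _ _ [Y <-] [Y' <-]; exists (mul Y Y'); rewrite betaM.
move=> x _ [Y <-]; rewrite -beta_scal -raddfB -!betaM -(raddf0 beta) => /beta_inj.
by move/(cl_normal_mul_eq0 (cl_normal_subr_scal x X_normal)) ->.
Qed.

Section Diagonalized.
Variables (M : T) (P : 'M[C]_N) (d : 'rV[C]_N).
Hypotheses (P_unit : P \in unitmx) (betaM_diag : beta M = invmx P *m diag_mx d *m P).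

Let s := [seq d 0 i | i <- enum 'I_N].

(* beta (cl_Mk M k) is g_k(beta M) for g_k = \sum_(j < k) sesym s j X^(k - j). *)
Let G k : 'rV[C]_N := \row_i \sum_(j < k) sesym s j * d 0 i ^+ (k - j).

Lemma mxtrace_diag_G k : \tr (diag_mx (G k)) = - (k%:R * sesym s k).
Proof.
rewrite mxtrace_diag; under eq_bigr do rewrite mxE.
rewrite exchange_big /=; apply/eqP; rewrite -addr_eq0 -[X in _ == X](newton_sesym s k).
apply/eqP; congr (_ + _); apply: eq_bigr => j _.
by rewrite /power_sum big_map big_enum mulr_sumr.
Qed.

Lemma cl_C_of_beta_Mk k : (0 < k)%N ->
  beta (cl_Mk M k) = invmx P *m diag_mx (G k) *m P -> cl_C M k = - sesym s k.
Proof.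
move=> k_gt0 beta_Mk; have := mxtrace_beta (cl_Mk M k).
rewrite beta_Mk mxtrace_conj // mxtrace_diag_G => trace_eq.
rewrite /cl_C /cl_scalar_part mulrAC -trace_eq mulNr mulrC mulKf // pnatr_eq0 -lt0n //.
Qed.

Lemma G_succ k : G k.+2 = \row_i (d 0 i * (G k.+1 0 i + sesym s k.+1)).
Proof.
apply/rowP => i; rewrite !mxE big_ord_recr /= subSnn expr1 mulrDr mulr_sumr.
rewrite [sesym s k.+1 * _]mulrC; congr (_ + _); apply: eq_bigr => j _.
by rewrite subSn 1?ltnW // exprS mulrCA.
Qed.

Lemma beta_Mk k : beta (cl_Mk M k.+1) = invmx P *m diag_mx (G k.+1) *m P.
Proof.
elim: k => [|k IH].
  rewrite betaM_diag; congr (_ *m diag_mx _ *m _); apply/rowP => i.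
  by rewrite mxE big_ord1 subn0 expr1 sesym0 mul1r.
rewrite cl_MkSS betaM raddfB /= beta_scal IH (cl_C_of_beta_Mk _ IH) // betaM_diag.
rewrite conj_subr_scalar // conj_mulmx // G_succ mul_diag_mx.
congr (_ *m _ *m _); apply/matrixP => i j; rewrite !mxE.
by case: eqVneq => [->|_]; rewrite ?mulr1n ?opprK ?mulr0n ?subrr ?mulr0.
Qed.

Lemma cl_C_sesym k : (0 < k)%N -> cl_C M k = - sesym s k.
Proof. by case: k => // k _; apply: cl_C_of_beta_Mk (beta_Mk k). Qed.

Lemma rank_beta_count : \rank (beta M) = count (predC1 0) s.
Proof.
rewrite betaM_diag mxrankMfree ?row_free_unit // -mxrank_tr trmx_mul mxrankMfree.
  by rewrite mxrank_tr rank_diag_mx.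
by rewrite row_free_unit unitmx_tr unitmx_inv.
Qed.

Lemma size_eigenvalues : size s = N.
Proof. by rewrite size_map size_enum_ord. Qed.

End Diagonalized.

Lemma rank_beta_normal X : cl_normal X ->
  [/\ (\rank (beta X) <= N)%N,
      forall j, (\rank (beta X) < j)%N -> cl_C X j = 0 &
      (0 < \rank (beta X))%N -> cl_C X (\rank (beta X)) != 0].
Proof.
move=> X_normal.
have [P P_unit /(similar_diagLR P_unit) [d betaX_diag]] := diagonalizable_beta_normal X_normal.
rewrite conjumx ?unitmx_inv // invmxK in betaX_diag.
have C_sesym := cl_C_sesym P_unit betaX_diag.
rewrite (rank_beta_count P_unit betaX_diag); split.
- by rewrite -[X in (_ <= X)%N](size_eigenvalues d) count_size.
- by move=> j lt_j; rewrite C_sesym ?(leq_ltn_trans _ lt_j) // sesym_eq0 ?oppr0.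
- by move=> r_gt0; rewrite C_sesym // oppr_eq0 sesym_count_neq0.
Qed.

End Representation.
End CliffordBasis.

Unset Implicit Arguments.

Theorem theorem5 (R : realType) (p q : nat) (M : cl p q R[i]) :
  (1 <= p + q)%N ->
  cl_normal M ->
  forall beta : cl p q R[i] -> 'M[R[i]]_(cl_N p q),
    is_beta beta ->
    [/\ cl_C M (cl_N p q) != 0 -> \rank (beta M) = cl_N p q,
        forall k : nat, (2 <= k <= (cl_N p q).-1)%N ->
          (forall j : nat, (k < j <= cl_N p q)%N -> cl_C M j = 0) ->
          cl_C M k != 0 -> \rank (beta M) = k,
        (forall j : nat, (2 <= j <= cl_N p q)%N -> cl_C M j = 0) ->
          M != 0 -> \rank (beta M) = 1%N &
        M = 0 -> \rank (beta M) = 0%N].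
Proof.
move=> _ M_normal beta beta_is.
have [r_le_N C_gt_r C_r_neq0] := rank_beta_normal beta_is M_normal.
have rank_eq0 : (\rank (beta M) == 0%N) = (M == 0) by rewrite mxrank_eq0 beta_eq0.
set r := \rank (beta M) in r_le_N C_gt_r C_r_neq0 rank_eq0 *.
have le_r k : cl_C M k != 0 -> (k <= r)%N.
  by rewrite leqNgt; apply: contra => /C_gt_r/eqP.
have r_le k : (k <= cl_N p q)%N -> (forall j, (k < j <= cl_N p q)%N -> cl_C M j = 0) ->
    (r <= k)%N.
  move=> k_le_N C_gt_k; rewrite leqNgt; apply/negP => lt_kr.
  by move/eqP: (C_r_neq0 (leq_ltn_trans (leq0n k) lt_kr)); rewrite C_gt_k ?lt_kr.
split.
- by move=> CN_neq0; apply/eqP; rewrite eqn_leq r_le_N le_r.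
- move=> k /andP[_ k_lt_N] C_gt_k Ck_neq0; apply/eqP; rewrite eqn_leq le_r // andbT.
  by apply: r_le C_gt_k; rewrite (leq_trans k_lt_N) ?leq_pred.
- move=> C_ge2 M_neq0; apply/eqP; rewrite eqn_leq lt0n rank_eq0 M_neq0 andbT.
  by apply: r_le C_ge2; rewrite N_gt0.
- by move=> M0; apply/eqP; rewrite rank_eq0 M0.
Qed.
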